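(* Let $M,N$ be relatively prime positive integers. Then every unit norm tight frame $\Phi=\{\varphi_n\}_{n=1}^N\subseteq\mathbb{R}^M$ yields almost injective intensity measurements, i.e., the map $\mathcal{A}\colon\mathbb{R}^M/\{\pm1\}\to\mathbb{R}^N$, $(\mathcal{A}(x))(n):=|\langle x,\varphi_n\rangle|^2$, satisfies $\mathcal{A}^{-1}(\mathcal{A}(x))=\{\pm x\}$ for almost every $x\in\mathbb{R}^M$.
   Context: A unit norm tight frame is a collection $\{\varphi_n\}_{n=1}^N\subseteq\mathbb{R}^M$ with $\|\varphi_n\|=1$ for all $n$ and a constant $A>0$ such that $\sum_{n=1}^N|\langle x,\varphi_n\rangle|^2=A\|x\|^2$ for all $x\in\mathbb{R}^M$ (equivalently $\Phi\Phi^*=\frac{N}{M}I$ where $\Phi$ is the matrix with columns $\varphi_n$). *)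

From HB Require Import structures.
From mathcomp Require Import all_boot all_order all_algebra.
From mathcomp Require Import reals.
Set Implicit Arguments. Unset Strict Implicit. Unset Printing Implicit Defensive.
Import Order.TTheory GRing.Theory Num.Theory.
Local Open Scope ring_scope.

Definition dotp (R : realType) (M : nat) (x y : 'rV[R]_M) : R :=
  \sum_(i < M) x 0 i * y 0 i.

Definition enorm (R : realType) (M : nat) (x : 'rV[R]_M) : R :=
  Num.sqrt (dotp x x).

Definition unit_norm_tight_frame (R : realType) (M N : nat)
    (Phi : 'I_N -> 'rV[R]_M) : Prop :=
  (forall n, enorm (Phi n) = 1) /\
  exists A : R, 0 < A /\
    forall x : 'rV[R]_M,
      \sum_(n < N) `|dotp x (Phi n)| ^+ 2 = A * enorm x ^+ 2.

Definition intensity (R : realType) (M N : nat)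
    (Phi : 'I_N -> 'rV[R]_M) (x : 'rV[R]_M) : 'I_N -> R :=
  fun n => `|dotp x (Phi n)| ^+ 2.

Definition in_box (R : realType) (M : nat) (a b x : 'rV[R]_M) : Prop :=
  forall i, a 0 i <= x 0 i <= b 0 i.

Definition box_vol (R : realType) (M : nat) (a b : 'rV[R]_M) : R :=
  \prod_(i < M) (b 0 i - a 0 i).

Definition lebesgue_null (R : realType) (M : nat) (S : 'rV[R]_M -> Prop) : Prop :=
  forall e : R, 0 < e ->
    exists a b : nat -> 'rV[R]_M,
      (forall k i, a k 0 i <= b k 0 i) /\
      (forall x, S x -> exists k, in_box (a k) (b k) x) /\
      (forall K, \sum_(k < K) box_vol (a k) (b k) <= e).

Definition ae_rV (R : realType) (M : nat) (P : 'rV[R]_M -> Prop) : Prop :=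
  lebesgue_null (fun x => ~ P x).

From HB Require Import structures.
From mathcomp Require Import all_boot all_order all_algebra.
From mathcomp Require Import reals.
From mathcomp Require Import ring lra.
From Stdlib Require Import Classical IndefiniteDescription.
Set Implicit Arguments. Unset Strict Implicit. Unset Printing Implicit Defensive.
Import Order.TTheory GRing.Theory Num.Theory.
Local Open Scope ring_scope.

(* If [y] has the intensities of [x] and [y <> x, - x], let [S] be the set of [n] with
   [<x + y, phi_n> = 0]; then the nonzero vectors [x + y] and [x - y] are orthogonal to
   [{phi_n | n in S}] and to [{phi_n | n notin S}] respectively. For a unit norm tight
   frame with [gcd(M, N) = 1] the spans of these two subfamilies meet nontrivially:
   otherwise the frame operator of the subfamily [S] acts as the frame bound [A] on its
   span, and taking traces gives [|S| = A dim span S] and [N = A M], so [M] divides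
   [dim span S], which is then [0] or [M], contradicting the existence of [x + y] or
   [x - y]. A nonzero [c] in the intersection is orthogonal to [2 x = (x + y) + (x - y)],
   so the bad [x] lie in finitely many hyperplanes, and hyperplanes are Lebesgue null. *)

Section InnerProduct.
Variables (R : realType) (M : nat).
Implicit Types x y z : 'rV[R]_M.

Lemma dotpE x y : dotp x y = (x *m y^T) 0 0.
Proof. by rewrite /dotp !mxE; apply: eq_bigr => i _; rewrite !mxE. Qed.

Lemma dotpC x y : dotp x y = dotp y x.
Proof. by rewrite /dotp; apply: eq_bigr => i _; rewrite mulrC. Qed.

Lemma dotpDl x y z : dotp (x + y) z = dotp x z + dotp y z.
Proof. by rewrite /dotp -big_split; apply: eq_bigr => i _; rewrite mxE mulrDl. Qed.

Lemma dotpDr x y z : dotp z (x + y) = dotp z x + dotp z y.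
Proof. by rewrite dotpC dotpDl !(dotpC z). Qed.

Lemma dotpNl x y : dotp (- x) y = - dotp x y.
Proof. by rewrite /dotp -sumrN; apply: eq_bigr => i _; rewrite mxE mulNr. Qed.

Lemma dotp_ge0 x : 0 <= dotp x x.
Proof. by apply: sumr_ge0 => i _; rewrite -expr2 sqr_ge0. Qed.

Lemma dotp_eq0 x : dotp x x = 0 -> x = 0.
Proof.
move=> /eqP; rewrite psumr_eq0 => [/allP x0|i _]; last by rewrite -expr2 sqr_ge0.
apply/rowP => i; rewrite mxE; apply/eqP.
by have := x0 i (mem_index_enum i); rewrite mulf_eq0 orbb.
Qed.

Lemma dotp_delta i y : dotp (delta_mx 0 i) y = y 0 i.
Proof.
rewrite /dotp (bigD1 i) //= big1 ?addr0; first by rewrite mxE !eqxx mul1r.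
by move=> k /negPf ki; rewrite mxE ki andbF mul0r.
Qed.

Lemma enorm_sqr x : enorm x ^+ 2 = dotp x x.
Proof. exact/sqr_sqrtr/dotp_ge0. Qed.

End InnerProduct.

Section SubframeSpans.
Variables (R : realType) (M N : nat) (Phi : 'I_N -> 'rV[R]_M).
Implicit Types (S : {set 'I_N}) (u v : 'rV[R]_M).

(* The row space of [subframe_mx S] is the span of [{Phi n | n \in S}]. *)
Definition subframe_mx S : 'M[R]_(N, M) :=
  \matrix_(n, i) (if n \in S then Phi n 0 i else 0).

Definition frame_op S : 'M[R]_M := (subframe_mx S)^T *m subframe_mx S.

Lemma frame_opE S i j : frame_op S i j = \sum_(n in S) Phi n 0 i * Phi n 0 j.
Proof.
rewrite mxE [RHS]big_mkcond; apply: eq_bigr => n _; rewrite !mxE.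
by case: (n \in S); rewrite ?mulr0.
Qed.

Lemma frame_op_setC S : frame_op S + frame_op (~: S) = frame_op setT.
Proof.
apply/matrixP => i j; rewrite mxE !frame_opE [RHS](bigID (mem S)) /=.
by congr (_ + _); apply: eq_bigl => n; rewrite !inE.
Qed.

Lemma frame_op_tight (a : R) :
  (forall x, \sum_n dotp x (Phi n) ^+ 2 = a * dotp x x) -> frame_op setT = a%:M.
Proof.
move=> tight; have sum_sqr i : \sum_n Phi n 0 i ^+ 2 = a.
  have := tight (delta_mx 0 i); rewrite dotp_delta mxE !eqxx mulr1 => <-.
  by apply: eq_bigr => n _; rewrite dotp_delta.
apply/matrixP => i j; rewrite frame_opE mxE.
under eq_bigl do rewrite inE.
case: eqP => [<-|/eqP ij]; first by rewrite -(sum_sqr i); apply: eq_bigr => n _; rewrite expr2.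
have := tight (delta_mx 0 i + delta_mx 0 j).
rewrite dotpDl !dotp_delta !mxE !eqxx (negPf ij) eq_sym (negPf ij) /=.
under eq_bigr do rewrite dotpDl !dotp_delta sqrrD.
rewrite !big_split /= !sum_sqr mulr0n.
by set s := \sum_n _; lra.
Qed.

Lemma dotp_subframe_orth S u c :
  {in S, forall n, dotp u (Phi n) = 0} -> (c <= subframe_mx S)%MS -> dotp c u = 0.
Proof.
move=> uS /submxP [w ->]; rewrite dotpE -mulmxA.
suff -> : subframe_mx S *m u^T = 0 by rewrite mulmx0 mxE.
apply/matrixP => n k; rewrite !mxE (ord1 k).
case: (boolP (n \in S)) => [nS|nS]; last by apply: big1 => i _; rewrite !mxE (negPf nS) mul0r.
transitivity (dotp (Phi n) u); last by rewrite dotpC uS.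
by apply: eq_bigr => i _; rewrite !mxE nS.
Qed.

Lemma subframe_orth_eq0 S u :
  {in S, forall n, dotp u (Phi n) = 0} -> (u <= subframe_mx S)%MS -> u = 0.
Proof. by move=> uS /(dotp_subframe_orth uS)/dotp_eq0. Qed.

Lemma mxtrace_frame_op_card S :
  (forall n, dotp (Phi n) (Phi n) = 1) -> \tr (frame_op S) = #|S|%:R.
Proof.
move=> unit; rewrite mxtrace_mulC /mxtrace -sum1_card natr_sum [RHS]big_mkcond.
apply: eq_bigr => n _; rewrite mxE; case: (boolP (n \in S)) => nS.
  transitivity (dotp (Phi n) (Phi n)); last by rewrite unit.
  by apply: eq_bigr => i _; rewrite !mxE nS.
by apply: big1 => i _; rewrite !mxE (negPf nS) mul0r.
Qed.

End SubframeSpans.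

Section TightSubframes.
Variables (R : realType) (M N : nat) (Phi : 'I_N -> 'rV[R]_M) (a : R).
Hypotheses (a_gt0 : 0 < a) (tight : frame_op Phi setT = a%:M).
Implicit Types (S : {set 'I_N}) (u v : 'rV[R]_M).

Local Notation span S := (subframe_mx Phi S).
Local Notation trivial_meet S := ((span S :&: span (~: S))%MS = 0).

Lemma trivial_meet_setC S : trivial_meet S -> trivial_meet (~: S).
Proof. by rewrite setCK capmxC. Qed.

(* [X *m frame_op S] lies in [span S], while [X *m frame_op (~: S) = a *: X - X *m frame_op S]
   lies in [span (~: S)] and (for [X] in [span S]) also in [span S]. *)
Lemma frame_op_restrict S k (X : 'M[R]_(k, M)) :
  trivial_meet S -> (X <= span S)%MS -> X *m frame_op Phi S = a *: X.
Proof.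
move=> meet0 XS.
have XFC : X *m frame_op Phi (~: S) = a *: X - X *m frame_op Phi S.
  by rewrite -mul_mx_scalar -tight -(frame_op_setC _ S) mulmxDr addrC addKr.
have XF_S (T : {set 'I_N}) : (X *m frame_op Phi T <= span T)%MS.
  by rewrite /frame_op mulmxA submxMl.
have : (X *m frame_op Phi (~: S) <= span S :&: span (~: S))%MS.
  rewrite sub_capmx XF_S andbT XFC addmx_sub ?scalemx_sub //.
  by rewrite (eqmx_opp (X *m frame_op Phi S)).
by rewrite meet0 submx0 XFC subr_eq0 => /eqP.
Qed.

Lemma mxtrace_frame_op_rank S :
  trivial_meet S -> \tr (frame_op Phi S) = a * (\rank (span S))%:R.
Proof.
move=> meet0; set B := row_base (span S).
have BS : (B <= span S)%MS by rewrite eq_row_base.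
set W := span S *m pinvmx B.
have WB : W *m B = span S by rewrite mulmxKpV ?eq_row_base.
have F_BWB : frame_op Phi S = B^T *m (W^T *m W) *m B.
  have -> : frame_op Phi S = (W *m B)^T *m (W *m B) by rewrite WB.
  by rewrite trmx_mul !mulmxA.
have BWB : B *m B^T *m (W^T *m W) = a%:M.
  apply: (row_free_inj (row_base_free (span S))).
  by rewrite mul_scalar_mx -(frame_op_restrict meet0 BS) F_BWB !mulmxA.
by rewrite F_BWB mxtrace_mulC mulmxA BWB mxtrace_scalar mulr_natr.
Qed.

Lemma rank_subframe_setC S :
  trivial_meet S -> (\rank (span S) + \rank (span (~: S)))%N = M.
Proof.
move=> meet0; rewrite -mxrank_sum_cap meet0 mxrank0 addn0.
apply/eqP; rewrite eqn_leq rank_leq_col -{1}(mxrank1 R M) mxrankS //.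
have -> : (1%:M : 'M[R]_M) = a^-1 *: (frame_op Phi S + frame_op Phi (~: S)).
  by rewrite frame_op_setC tight scale_scalar_mx mulVf ?gt_eqF.
by rewrite scalemx_sub // addmx_sub_adds // /frame_op submxMl.
Qed.

(* Comparing traces: [#|S| = a * rank S] for [S] and [~: S] gives [N = a * M]. *)
Lemma card_mul_rank_subframe S :
  (forall n, dotp (Phi n) (Phi n) = 1) -> trivial_meet S ->
  (M * #|S|)%N = (N * \rank (span S))%N.
Proof.
move=> unit meet0.
have trS := mxtrace_frame_op_rank meet0.
have trSC := mxtrace_frame_op_rank (trivial_meet_setC meet0).
rewrite !mxtrace_frame_op_card // in trS trSC.
have cardN : (N%:R : R) = #|S|%:R + #|~: S|%:R by rewrite -natrD cardsC card_ord.
have rkM : (M%:R : R) = (\rank (span S))%:R + (\rank (span (~: S)))%:R.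
  by rewrite -natrD rank_subframe_setC.
by apply/eqP; rewrite -(eqr_nat R) !natrM cardN rkM trS trSC; apply/eqP; ring.
Qed.

Lemma subframe_spans_meet S u v :
  coprime M N -> (forall n, dotp (Phi n) (Phi n) = 1) -> u != 0 -> v != 0 ->
  {in S, forall n, dotp u (Phi n) = 0} -> {in ~: S, forall n, dotp v (Phi n) = 0} ->
  (span S :&: span (~: S))%MS != 0.
Proof.
move=> coMN unit u0 v0 uS vSC; apply/eqP => meet0.
have full_eq0 T w : \rank (span T) = M -> {in T, forall n, dotp w (Phi n) = 0} -> w = 0.
  by move=> rkT wT; apply: (subframe_orth_eq0 wT); rewrite submx_full // /row_full rkT.
have : (M %| \rank (span S))%N.
  by rewrite -(Gauss_dvdr _ coMN) -card_mul_rank_subframe // dvdn_mulr.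
have [rk0|rk_gt0] := posnP (\rank (span S)).
  have rkC : \rank (span (~: S)) = M by rewrite -[RHS](rank_subframe_setC meet0) rk0.
  by move: v0; rewrite (full_eq0 _ _ rkC vSC) eqxx.
move/(dvdn_leq rk_gt0); rewrite leq_eqVlt ltnNge rank_leq_col orbF => /eqP rkS.
by move: u0; rewrite (full_eq0 _ _ (esym rkS) uS) eqxx.
Qed.

End TightSubframes.

Lemma ler_sum_uniq (R : numDomainType) (T : eqType) (s s' : seq T) (F : T -> R) :
  uniq s -> uniq s' -> {subset s <= s'} -> (forall t, 0 <= F t) ->
  \sum_(t <- s) F t <= \sum_(t <- s') F t.
Proof.
move=> us us' ss' F0.
have s_perm : perm_eq s [seq t <- s' | t \in s].
  apply: uniq_perm; rewrite ?filter_uniq // => t.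
  by rewrite mem_filter; case: (boolP (t \in s)) => // /ss' ->.
by rewrite (perm_big _ s_perm) big_filter [leRHS](bigID (mem s)) /= lerDl sumr_ge0.
Qed.

Lemma sum_geometric_half_le (R : realFieldType) (e : R) (K : nat) :
  0 <= e -> \sum_(k < K) e / 2 ^+ k.+1 <= e.
Proof.
move=> e0; suff -> : \sum_(k < K) e / 2 ^+ k.+1 = e - e / 2 ^+ K.
  by rewrite gerBl divr_ge0 ?exprn_ge0.
elim: K => [|K IH]; first by rewrite big_ord0 expr0 divr1 subrr.
rewrite big_ord_recr /= IH exprS.
have : (2 : R) ^+ K != 0 by rewrite expf_neq0 // pnatr_eq0.
by move=> ?; field.
Qed.

Section LebesgueNull.
Variables (R : realType) (M : nat).
Hypothesis M_gt0 : (0 < M)%N.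
Implicit Types (P Q : 'rV[R]_M -> Prop) (a b : 'rV[R]_M).

Lemma lebesgue_nullS P Q : (forall x, P x -> Q x) -> lebesgue_null Q -> lebesgue_null P.
Proof.
move=> PQ nullQ e e0; have [a [b [ab [cover vol]]]] := nullQ e e0.
by exists a, b; split; [|split] => // x /PQ /cover.
Qed.

Lemma box_vol_ge0 a b : (forall i, a 0 i <= b 0 i) -> 0 <= box_vol a b.
Proof. by move=> ab; apply: prodr_ge0 => i _; rewrite subr_ge0. Qed.

Lemma box_vol0 : box_vol (0 : 'rV[R]_M) 0 = 0.
Proof. by rewrite /box_vol (bigD1 (Ordinal M_gt0)) //= !mxE subrr mul0r. Qed.

(* Countably indexed covers are enumerated along [pickle_inv]; the indices outside
   its range get the degenerate box [0], whence [0 < M]. *)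
Lemma lebesgue_null_countable P :
  (forall e, 0 < e -> exists (T : countType) (a b : T -> 'rV[R]_M),
     [/\ forall t i, a t 0 i <= b t 0 i,
         forall x, P x -> exists t, in_box (a t) (b t) x
       & forall s : seq T, uniq s -> \sum_(t <- s) box_vol (a t) (b t) <= e]) ->
  lebesgue_null P.
Proof.
move=> cov e /cov [T [a [b [ab cover vol]]]].
exists (fun k => oapp a 0 (pickle_inv k)), (fun k => oapp b 0 (pickle_inv k)).
split; [|split].
- by move=> k i; case: (pickle_inv k) => [t|] //=; rewrite mxE.
- by move=> x /cover [t xt]; exists (pickle t); rewrite pickleK_inv.
- move=> K; pose vol' k := oapp (fun t => box_vol (a t) (b t)) 0 (pickle_inv k).
  have -> : \sum_(k < K) box_vol (oapp a 0 (pickle_inv k)) (oapp b 0 (pickle_inv k))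
      = \sum_(t <- pmap pickle_inv (iota 0 K)) box_vol (a t) (b t).
    transitivity (\sum_(k < K) vol' k).
      by apply: eq_bigr => k _; rewrite /vol'; case: (pickle_inv k) => //=; rewrite box_vol0.
    by rewrite big_pmap -(big_mkord xpredT vol') /index_iota subn0.
  by apply: vol; apply: (pmap_uniq (@pickle_invK T)) (iota_uniq 0 K).
Qed.

Lemma lebesgue_null0 : lebesgue_null (fun _ : 'rV[R]_M => False).
Proof.
move=> e e0; exists (fun _ => 0), (fun _ => 0); split; [|split] => //.
by move=> K; rewrite big1 ?box_vol0 // ltW.
Qed.

Lemma lebesgue_null_inhabited P : (forall x, P x -> lebesgue_null P) -> lebesgue_null P.
Proof.
move=> nullP; have [[x Px]|noP] := classic (exists x, P x); first exact: nullP Px.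
by apply: lebesgue_nullS lebesgue_null0 => x Px; apply: noP; exists x.
Qed.

(* The [k]-th set is covered with total volume at most [e / 2 ^+ k.+1]. *)
Lemma lebesgue_null_bigcup (P : nat -> 'rV[R]_M -> Prop) :
  (forall k, lebesgue_null (P k)) -> lebesgue_null (fun x => exists k, P k x).
Proof.
move=> nullP; apply: lebesgue_null_countable => e e0.
have ek0 k : 0 < e / 2 ^+ k.+1 by rewrite divr_gt0 ?exprn_gt0.
have /functional_choice [A /functional_choice [B covk]] := fun k => nullP k _ (ek0 k).
exists (nat * nat)%type, (fun t => A t.1 t.2), (fun t => B t.1 t.2); split.
- by move=> [k l] i; have [ab _] := covk k; apply: ab.
- by move=> x [k /(proj1 (proj2 (covk k))) [l xkl]]; exists (k, l).
move=> s us; set L := (\sum_(t <- s) (t.1 + t.2)).+1.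
have s_sub : {subset s <= [seq (k, l) | k <- index_iota 0 L, l <- index_iota 0 L]}.
  move=> [k l] kl.
  have kl_le : (k + l <= \sum_(t <- s) (t.1 + t.2))%N by rewrite (big_rem _ kl) leq_addr.
  by apply: allpairs_f; rewrite mem_index_iota ltnS /= (leq_trans _ kl_le) ?leq_addr ?leq_addl.
apply: (le_trans (ler_sum_uniq _ _ s_sub _)) => //.
- by rewrite allpairs_uniq ?iota_uniq // => -[? ?] [? ?] _ _ [-> ->].
- by move=> [k l]; have [ab _] := covk k; apply: box_vol_ge0 => i; apply: ab.
rewrite big_allpairs; apply: le_trans (sum_geometric_half_le L (ltW e0)).
rewrite big_mkord; apply: ler_sum => k _.
by have [_ [_ volk]] := covk k; rewrite big_mkord volk.
Qed.

Lemma lebesgue_null_bigcup_countable (T : countType) (P : T -> 'rV[R]_M -> Prop) :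
  (forall t, lebesgue_null (P t)) -> lebesgue_null (fun x => exists t, P t x).
Proof.
move=> nullP; pose Q k := oapp P (fun _ => False) (pickle_inv k).
apply: (@lebesgue_nullS _ (fun x => exists k, Q k x)).
  by move=> x [t Ptx]; exists (pickle t); rewrite /Q pickleK_inv.
by apply: lebesgue_null_bigcup => k; rewrite /Q; case: (pickle_inv k) => //=; apply: lebesgue_null0.
Qed.

Lemma lebesgue_null_finite (K : R) P :
  (forall n, exists (T : finType) (a b : T -> 'rV[R]_M),
     [/\ forall t i, a t 0 i <= b t 0 i,
         forall x, P x -> exists t, in_box (a t) (b t) x
       & \sum_t box_vol (a t) (b t) <= K / n.+1%:R]) ->
  lebesgue_null P.
Proof.
move=> cov; apply: lebesgue_null_countable => e e0.
have [T [a [b [ab cover vol]]]] := cov (Num.trunc (K / e)).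
exists T, a, b; split => // s us.
apply: le_trans (ler_sum_uniq us (enum_uniq T) _ _) _ => [t _|t|].
- by rewrite mem_enum.
- exact: box_vol_ge0.
rewrite big_enum /=; apply: le_trans vol _.
by rewrite ler_pdivrMr // mulrC -ler_pdivrMr // ltW // truncnS_gt.
Qed.

End LebesgueNull.

Section Hyperplane.
Variables (R : realType) (M : nat).
Hypothesis M_gt0 : (0 < M)%N.

(* [-r, r] is cut into [n.+1] intervals of length [grid_step r n]; [grid_index r n y]
   is the interval containing [y] (the last one when [y = r]). *)
Definition grid_step (r : R) (n : nat) : R := 2 * r / n.+1%:R.

Definition grid_index (r : R) (n : nat) (y : R) : 'I_n.+1 :=
  inord (minn (Num.trunc ((y + r) / grid_step r n)) n).

Lemma grid_step_gt0 r n : 0 < r -> 0 < grid_step r n.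
Proof. by move=> r0; rewrite divr_gt0 ?mulr_gt0. Qed.

Lemma grid_indexP r n y : 0 < r -> `|y| <= r ->
  let z := - r + (grid_index r n y)%:R * grid_step r n in z <= y <= z + grid_step r n.
Proof.
move=> r0 yr; have d0 := grid_step_gt0 n r0; set d := grid_step r n.
set t := (y + r) / d; have yE : y = - r + t * d by rewrite divfK ?gt_eqF //; ring.
have /andP [ry yr'] : - r <= y <= r by rewrite -ler_norml.
have t0 : 0 <= t by rewrite divr_ge0 ?(ltW d0) //; lra.
have tn : t <= n.+1%:R by rewrite ler_pdivrMr // mulrC /d divfK ?pnatr_eq0 //; lra.
suff /andP [kt tk] : (grid_index r n y)%:R <= t <= (grid_index r n y)%:R + 1.
  rewrite /= [X in _ <= X <= _]yE -addrA !lerD2l ler_pM2r // kt /=.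
  by rewrite -[X in _ <= _ + X]mul1r -mulrDl ler_pM2r.
rewrite /grid_index inordK ?ltnS ?geq_minr //.
have /andP [trunc_le trunc_gt] := truncn_itv t0.
case: (leqP (Num.trunc t) n) => [_|n_tr]; first by rewrite trunc_le natr1 ltW.
rewrite natr1 tn andbT.
by apply: le_trans trunc_le; rewrite ler_nat ltnW.
Qed.

Section Cells.
Variables (c : 'rV[R]_M) (j : 'I_M) (r : R) (n : nat).
Hypotheses (cj_neq0 : c 0 j != 0) (r_gt0 : 0 < r).
Implicit Types (f : {ffun 'I_M -> 'I_n.+1}) (x : 'rV[R]_M).

Definition grid_vertex f i : R := - r + (f i)%:R * grid_step r n.

Definition cell_height : R := (\sum_i `|c 0 i|) * grid_step r n / `|c 0 j|.

(* Over the vertex [f] (whose [j]-th coordinate is ignored) the hyperplane [c^perp]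
   passes at height [hyperplane_height f] in direction [j]. *)
Definition hyperplane_height f : R :=
  - (\sum_(i | i != j) c 0 i * grid_vertex f i) / c 0 j.

(* Only cells with [f j = ord0] are proper (the others are degenerate in direction [j]),
   so the total volume is [(2 r) ^ (M - 1) * 2 * cell_height], which is [O(1 / n)]. *)
Definition cell_lo f : 'rV[R]_M :=
  \row_i if i == j then hyperplane_height f - cell_height else grid_vertex f i.

Definition cell_hi f : 'rV[R]_M :=
  \row_i if i == j then hyperplane_height f + (if f j == ord0 then cell_height else - cell_height)
         else grid_vertex f i + grid_step r n.

Lemma cell_height_ge0 : 0 <= cell_height.
Proof. by rewrite !mulr_ge0 ?sumr_ge0 ?invr_ge0 // ltW ?grid_step_gt0. Qed.

Lemma cell_lo_le_hi f i : cell_lo f 0 i <= cell_hi f 0 i.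
Proof.
have h0 := cell_height_ge0; have d0 := grid_step_gt0 n r_gt0.
by rewrite !mxE; case: eqP => _; [case: eqP => _|]; lra.
Qed.

Lemma sum_box_vol_cells :
  \sum_(f : {ffun 'I_M -> 'I_n.+1}) box_vol (cell_lo f) (cell_hi f) =
  (4 * r * (\sum_i `|c 0 i|) * \prod_(i | i != j) (2 * r) / `|c 0 j|) / n.+1%:R.
Proof.
pose F i (t : 'I_n.+1) : R :=
  if i == j then (if t == ord0 then 2 * cell_height else 0) else grid_step r n.
transitivity (\sum_(f : {ffun 'I_M -> 'I_n.+1}) \prod_i F i (f i)).
  apply: eq_bigr => f _; apply: eq_bigr => i _; rewrite !mxE /F.
  by case: eqP => [->|_]; [case: eqP => _|]; ring.
rewrite -bigA_distr_bigA (bigD1 j) //= {1}/F eqxx -big_mkcond big_pred1_eq.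
have -> : \prod_(i | i != j) \sum_t F i t = \prod_(i | i != j) (2 * r).
  apply: eq_bigr => i ij; rewrite /F (negPf ij) /= sumr_const card_ord.
  by rewrite /grid_step -[LHS]mulr_natr divfK ?pnatr_eq0.
by rewrite /cell_height /grid_step; field; rewrite nat1r pnatr_eq0 normr_eq0 cj_neq0.
Qed.

(* Solving [dotp c x = 0] for [x 0 j] and comparing with the vertex. *)
Lemma hyperplane_height_dist f x : dotp c x = 0 ->
  (forall i, i != j -> `|x 0 i - grid_vertex f i| <= grid_step r n) ->
  `|x 0 j - hyperplane_height f| <= cell_height.
Proof.
move=> cx0 near.
have cxj : c 0 j * x 0 j = - \sum_(i | i != j) c 0 i * x 0 i.
  by move: cx0; rewrite /dotp (bigD1 j) //= => /eqP; rewrite addr_eq0 => /eqP.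
have -> : x 0 j - hyperplane_height f =
    (\sum_(i | i != j) c 0 i * (grid_vertex f i - x 0 i)) / c 0 j.
  have -> : x 0 j = - (\sum_(i | i != j) c 0 i * x 0 i) / c 0 j.
    by rewrite -cxj mulrC mulKf.
  rewrite [in RHS](eq_bigr (fun i => c 0 i * grid_vertex f i - c 0 i * x 0 i)).
    by rewrite sumrB /hyperplane_height; field.
  by move=> i _; rewrite mulrBr.
rewrite normf_div ler_pdivrMr ?normr_gt0 // /cell_height divfK ?normr_eq0 //.
apply: (le_trans (ler_norm_sum _ _ _)).
apply: (@le_trans _ _ (\sum_(i | i != j) `|c 0 i| * grid_step r n)).
  by apply: ler_sum => i ij; rewrite normrM distrC ler_wpM2l ?near.
rewrite -mulr_suml ler_wpM2r //; first exact: ltW (grid_step_gt0 n r_gt0).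
by rewrite [leRHS](bigD1 j) //= lerDr.
Qed.

Lemma cells_cover x : dotp c x = 0 -> (forall i, `|x 0 i| <= r) ->
  exists f, in_box (cell_lo f) (cell_hi f) x.
Proof.
move=> cx0 xr.
pose f : {ffun 'I_M -> 'I_n.+1} :=
  [ffun i => if i == j then ord0 else grid_index r n (x 0 i)].
have vertex_le i : i != j -> grid_vertex f i <= x 0 i <= grid_vertex f i + grid_step r n.
  by move=> ij; rewrite /grid_vertex ffunE (negPf ij); apply: grid_indexP.
exists f => i; rewrite !mxE; case: (eqVneq i j) => [->|ij]; last exact: vertex_le.
rewrite ffunE !eqxx -ler_distl; apply: hyperplane_height_dist => // k kj.
by have /andP := vertex_le k kj; rewrite ler_norml; case=> ? ?; apply/andP; split; lra.
Qed.

End Cells.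

Lemma lebesgue_null_hyperplane_cube (c : 'rV[R]_M) (j : 'I_M) (r : R) :
  c 0 j != 0 -> 0 < r ->
  lebesgue_null (fun x => dotp c x = 0 /\ forall i, `|x 0 i| <= r).
Proof.
move=> cj0 r0; apply: (lebesgue_null_finite M_gt0) => n.
exists {ffun 'I_M -> 'I_n.+1}, (cell_lo (n := n) c j r), (cell_hi (n := n) c j r).
split; first exact: cell_lo_le_hi.
  by move=> x [cx0 xr]; exact: cells_cover.
by rewrite sum_box_vol_cells.
Qed.

Lemma lebesgue_null_hyperplane (c : 'rV[R]_M) :
  c != 0 -> lebesgue_null (fun x => dotp c x = 0).
Proof.
move=> c0; have [j cj0] : exists j, c 0 j != 0.
  apply/existsP; apply: contraNT c0 => /existsPn c0j.
  by apply/eqP/rowP => i; rewrite mxE; apply/eqP/negPn/c0j.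
apply: (@lebesgue_nullS _ _ _ (fun x => exists k : nat, dotp c x = 0 /\ forall i, `|x 0 i| <= k.+1%:R)).
  move=> x cx0; exists (\sum_i Num.trunc `|x 0 i|); split => // i.
  apply: ltW; apply: lt_le_trans (truncnS_gt _) _; rewrite ler_nat ltnS.
  by rewrite (bigD1 i) //= leq_addr.
by apply: (lebesgue_null_bigcup M_gt0) => k; apply: lebesgue_null_hyperplane_cube cj0 _.
Qed.

End Hyperplane.

Section AmbiguousVectors.
Variables (R : realType) (M N : nat) (Phi : 'I_N -> 'rV[R]_M).

Definition orth_split (S : {set 'I_N}) (x : 'rV[R]_M) :=
  exists u v, [/\ u != 0, v != 0, {in S, forall n, dotp u (Phi n) = 0},
    {in ~: S, forall n, dotp v (Phi n) = 0} & x *+ 2 = u + v].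

(* [u = x + y] and [v = x - y] satisfy [2 x = u + v] and
   [dotp u (Phi n) * dotp v (Phi n) = dotp x (Phi n) ^+ 2 - dotp y (Phi n) ^+ 2 = 0]. *)
Lemma orth_split_intensity x y :
  intensity Phi y = intensity Phi x -> y != x -> y != - x ->
  orth_split [set n | dotp (x + y) (Phi n) == 0] x.
Proof.
move=> xy yx yNx; exists (x + y), (x - y); split.
- by rewrite addr_eq0; apply: contra yNx => /eqP ->; rewrite opprK.
- by rewrite subr_eq0 eq_sym.
- by move=> n; rewrite inE => /eqP.
- move=> n; rewrite !inE => /negPf uPhi; apply/eqP.
  have := congr1 (fun f => f n) xy; rewrite /intensity !real_normK ?num_real // => sqr_eq.
  have : dotp (x + y) (Phi n) * dotp (x - y) (Phi n) == 0.
    by rewrite !dotpDl dotpNl mulrC -subr_sqr sqr_eq subrr.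
  by rewrite mulf_eq0 uPhi.
- by rewrite addrACA subrr addr0 mulr2n.
Qed.

Lemma orth_split_dotp S x c :
  (c <= subframe_mx Phi S)%MS -> (c <= subframe_mx Phi (~: S))%MS ->
  orth_split S x -> dotp c x = 0.
Proof.
move=> cS cSC [u [v [_ _ uS vSC x2]]].
have : dotp c (x *+ 2) = 0.
  by rewrite x2 dotpDr (dotp_subframe_orth uS cS) (dotp_subframe_orth vSC cSC) addr0.
by rewrite mulr2n dotpDr; lra.
Qed.

Lemma unit_norm_tight_frameP : unit_norm_tight_frame Phi ->
  (forall n, dotp (Phi n) (Phi n) = 1) /\ exists2 a, 0 < a & frame_op Phi setT = a%:M.
Proof.
move=> [unit [a [a0 tight]]]; split=> [n|]; first by rewrite -enorm_sqr unit expr1n.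
exists a => //; apply: frame_op_tight => x.
by rewrite -enorm_sqr -tight; apply: eq_bigr => n _; rewrite real_normK ?num_real.
Qed.

End AmbiguousVectors.

Unset Implicit Arguments.
Theorem theorem13 (R : realType) (M N : nat)
    (hM : (0 < M)%N) (hN : (0 < N)%N) (hcop : coprime M N)
    (Phi : 'I_N -> 'rV[R]_M) (hPhi : unit_norm_tight_frame Phi) :
  ae_rV (fun x : 'rV[R]_M =>
    forall y : 'rV[R]_M, intensity Phi y = intensity Phi x -> y = x \/ y = - x).
Proof.
have [unit [a a0 tight]] := unit_norm_tight_frameP hPhi.
apply: (@lebesgue_nullS _ _ _ (fun x => exists S, orth_split Phi S x)).
  move=> x ambiguous; apply: NNPP => no_split; apply: ambiguous => y xy.
  have [->|yx] := eqVneq y x; first by left.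
  have [->|yNx] := eqVneq y (- x); first by right.
  by case: no_split; exists [set n | dotp (x + y) (Phi n) == 0]; apply: orth_split_intensity.
apply: (lebesgue_null_bigcup_countable hM) => S.
apply: (lebesgue_null_inhabited hM) => _ [u [v [u0 v0 uS vSC _]]].
have meet := subframe_spans_meet a0 tight hcop unit u0 v0 uS vSC.
have := nz_row_sub (subframe_mx Phi S :&: subframe_mx Phi (~: S))%MS.
rewrite sub_capmx => /andP [cS cSC].
apply: lebesgue_nullS (lebesgue_null_hyperplane hM _) => [x|].
  exact: orth_split_dotp cS cSC.
by rewrite nz_row_eq0.
Qed.
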